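(* Let $\hat\kappa>0$ and $\mathbb{W}\in\mathbb{R}$. For each $\mathbb{W}'\in\mathbb{R}$ let $\alpha^*_{\hat\kappa}(\mathbb{W}')=\mathrm{Prob}(W^*_T<\mathbb{W}')$, where $W^*_T$ is the terminal wealth under an optimal control $\mathcal{P}^*_0$ of $\text{EW-LS}_{t_0}(\mathbb{W}',\hat\kappa)$, and let $\mathcal{D}^+_{LS}=\{(\mathbb{W}',\hat\kappa'):\hat\kappa'>0,\ 0<\alpha^*_{\hat\kappa'}(\mathbb{W}')<1\}$. Suppose $(\mathbb{W},\hat\kappa)\in\mathcal{D}^+_{LS}$ and that the following invertibility assumption holds at $(\mathbb{W},\hat\kappa)$: $\alpha^*_{\hat\kappa}(\cdot)$ is well defined (its value does not depend on the choice of optimal control) and for every $\mathbb{W}'\ne\mathbb{W}$ with $(\mathbb{W}',\hat\kappa)\in\mathcal{D}^+_{LS}$ we have $\alpha^*_{\hat\kappa}(\mathbb{W}')\ne\alpha^*_{\hat\kappa}(\mathbb{W})$. Then, writing $\alpha^*=\alpha^*_{\hat\kappa}(\mathbb{W})$, we have $(\alpha^*,\alpha^*\hat\kappa)\in\{(\alpha,\kappa):0<\alpha<1,\kappa>0\}$, and any solution of $\text{EW-LS}_{t_0}(\mathbb{W},\hat\kappa)$ is a solution of $\text{EW-ES}_{t_0}(\alpha^*,\alpha^*\hat\kappa)$.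
   Context: Decumulation problem on horizon $[0,T]$. Two assets: a stock index and a bond index; $S_t$, $B_t$ denote the real amounts invested, $W_t=S_t+B_t$. Between rebalancing times they evolve without control as jump diffusions $\frac{dS_t}{S_{t^-}}=(\mu^s-\lambda^s\gamma^s)dt+\sigma^s dZ^s+d\big(\sum_{i=1}^{\pi^s_t}(\xi^s_i-1)\big)$, $\frac{dB_t}{B_{t^-}}=(\mu^b-\lambda^b\gamma^b+\mu^b_c\mathbf 1_{\{B_{t^-}<0\}})dt+\sigma^b dZ^b+d\big(\sum_{i=1}^{\pi^b_t}(\xi^b_i-1)\big)$, where $\pi^s,\pi^b$ are Poisson processes with intensities $\lambda^s,\lambda^b$, $\log\xi^{s},\log\xi^b$ are i.i.d. double-exponential jump sizes, $\gamma^{s}=E[\xi^s-1]$, $\gamma^b=E[\xi^b-1]$, $dZ^s dZ^b=\rho_{sb}dt$, and the jump processes are independent of each other and of the Brownian motions. Rebalancing times $t_0=0<t_1<\dots<t_M=T$, equally spaced. At each $t_i$ the investor withdraws $\mathfrak{q}_i$, so $W(t_i^+)=W(t_i^-)-\mathfrak{q}_i$, then sets $S(t_i^+)=\mathfrak{p}_iW(t_i^+)$, $B(t_i^+)=(1-\mathfrak{p}_i)W(t_i^+)$. Controls $(\mathfrak{q}_i,\mathfrak{p}_i)$ are feedback functions of the state $(S(t_i^-),B(t_i^-))$ and $t_i$. Admissibility: for $i<M$, $\mathfrak{q}_i\in[\mathfrak{q}_{\min},\mathfrak{q}_{\max}]$ if $W_i^-\ge\mathfrak{q}_{\max}$ and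 $\mathfrak{q}_i\in[\mathfrak{q}_{\min},\max(\mathfrak{q}_{\min},W_i^-)]$ if $W_i^-<\mathfrak{q}_{\max}$; $\mathfrak{q}_M=0$; $\mathfrak{p}_i\in[0,1]$ if $W_i^+>0$ and $i<M$, $\mathfrak{p}_i=0$ if $W_i^+\le 0$ or $i=M$. $\mathcal{A}$ is the set of admissible controls $\mathcal{P}_0=\{(\mathfrak{q}_i,\mathfrak{p}_i)\}_{i=0}^M$. $E_{\mathcal{P}_0}^{(s,b),t_0^-}$ is expectation under control $\mathcal{P}_0$ given initial state $(S(t_0^-),B(t_0^-))=(s,b)$; $W_T$ is terminal wealth; $\epsilon$ is a fixed real stabilization constant. Standing assumption: the terminal wealth $W_T$ has a continuous distribution. $\text{EW-LS}_{t_0}(\mathbb{W},\hat\kappa)$: $\sup_{\mathcal{P}_0\in\mathcal{A}} E_{\mathcal{P}_0}^{(s,b),t_0^-}\big[\sum_{i=0}^M\mathfrak{q}_i+\hat\kappa\min(W_T-\mathbb{W},0)+\epsilon W_T\big]$. $\text{EW-ES}_{t_0}(\alpha,\kappa)$: $\sup_{\mathcal{P}_0\in\mathcal{A}} E_{\mathcal{P}_0}^{(s,b),t_0^-}\big[\sum_{i=0}^M\mathfrak{q}_i+\kappa\sup_{W'}\big(W'+\tfrac1\alpha\min(W_T-W',0)\big)+\epsilon W_T\big]$, equivalently $\sup_{W'}\sup_{\mathcal{P}_0}E[\sum\mathfrak{q}_i+\kappa(W'+\tfrac1\alpha\min(W_T-W',0))+\epsilon W_T]$; for each $(\alpha,\kappa)$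 the maximizing $W'$ (denoted $\mathbb{W}^*$) is assumed to exist. *)

From HB Require Import structures.
From mathcomp Require Import all_boot all_order all_algebra.
From mathcomp Require Import all_classical all_reals all_analysis.
Set Implicit Arguments. Unset Strict Implicit. Unset Printing Implicit Defensive.
Import Order.TTheory GRing.Theory Num.Theory.
Local Open Scope classical_set_scope.
Local Open Scope ring_scope.

(* Abstract decumulation model: a probability space (T, P), a type [Ctrl] of
   admissible controls P_0 in A, and for each control the random variables
   [Qsum c] = sum_{i=0}^M q_i and [WT c] = W_T (terminal wealth). *)

Section Decum.
Context {d : measure_display} {T : measurableType d} {R : realType}
        (P : probability T R) (Ctrl : Type)
        (Qsum WT : Ctrl -> T -> R) (eps : R).

Definition J_LS (W khat : R) (c : Ctrl) : \bar R :=
  (\int[P]_t ((Qsum c t + khat * Num.min (WT c t - W) 0 + eps * WT c t)%:E))%E.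

Definition LS_solution (W khat : R) (c : Ctrl) : Prop :=
  forall c' : Ctrl, (J_LS W khat c' <= J_LS W khat c)%E.

Definition G_ES (alpha kappa : R) (c : Ctrl) (W' : R) : \bar R :=
  (\int[P]_t ((Qsum c t + kappa * (W' + alpha^-1 * Num.min (WT c t - W') 0)
               + eps * WT c t)%:E))%E.

Definition J_ES (alpha kappa : R) (c : Ctrl) : \bar R :=
  ereal_sup (range (G_ES alpha kappa c)).

Definition ES_solution (alpha kappa : R) (c : Ctrl) : Prop :=
  forall c' : Ctrl, (J_ES alpha kappa c' <= J_ES alpha kappa c)%E.

Definition V_ES (alpha kappa W' : R) : \bar R :=
  ereal_sup (range (fun c => G_ES alpha kappa c W')).

(* a = alpha^*_{khat}(W') for some optimal control of EW-LS(W', khat) *)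
Definition alpha_rel (khat W' a : R) : Prop :=
  exists c : Ctrl, LS_solution W' khat c /\
    a%:E = P [set t | WT c t < W'].

Definition alpha_welldef (khat : R) : Prop :=
  forall W' a b, alpha_rel khat W' a -> alpha_rel khat W' b -> a = b.

Definition in_Dplus (W' khat' : R) : Prop :=
  0 < khat' /\ exists a, alpha_rel khat' W' a /\ 0 < a /\ a < 1.

End Decum.

From HB Require Import structures.
From mathcomp Require Import all_boot all_order all_algebra.
From mathcomp Require Import all_classical all_reals all_analysis.
From mathcomp Require Import measurable_realfun lra ring.
Import Order.TTheory GRing.Theory Num.Theory.
Local Open Scope classical_set_scope.
Local Open Scope ring_scope.

(* With kappa = alpha * khat, the inner EW-ES objective at level W' is the
   EW-LS objective at (W', khat) plus kappa * W'.  Hence if Wst maximises the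
   inner EW-ES value and c is EW-LS optimal at Wst, then under c the concave
   function w |-> E[min(W_T - w, 0)] + alpha * w is maximal at Wst.  Comparing
   its values at Wst and Wst +- h gives P(W_T < Wst) <= alpha <= P(W_T <= Wst),
   i.e. Wst is an alpha-quantile of W_T, and continuity of the distribution
   yields alpha^*_khat(Wst) = alpha.  Invertibility forces Wst = W, so any
   EW-LS solution at W attains the optimal EW-ES value. *)

Section integrable_EFin.
Set Implicit Arguments.
Unset Strict Implicit.
Context {d : measure_display} {T : measurableType d} {R : realType}
  {mu : {measure set T -> \bar R}}.
Implicit Types (f g : T -> R) (A : set T).

Lemma integrableD_EFin f g : mu.-integrable setT (EFin \o f) ->
  mu.-integrable setT (EFin \o g) -> mu.-integrable setT (EFin \o (f \+ g)).
Proof.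
move=> if_ ig; apply: (eq_integrable measurableT _ _ _ (integrableD measurableT if_ ig)) => t _.
by rewrite /= EFinD.
Qed.

Lemma integrableB_EFin f g : mu.-integrable setT (EFin \o f) ->
  mu.-integrable setT (EFin \o g) -> mu.-integrable setT (EFin \o (f \- g)).
Proof.
move=> if_ ig; apply: (eq_integrable measurableT _ _ _ (integrableB measurableT if_ ig)).
by move=> t _; rewrite /= EFinB.
Qed.

Lemma integrableZl_EFin k f : mu.-integrable setT (EFin \o f) ->
  mu.-integrable setT (EFin \o (fun t => k * f t)).
Proof.
move=> if_; apply: (eq_integrable measurableT _ _ _ (integrableZl measurableT k if_)) => t _.
by rewrite /= EFinM.
Qed.

Lemma EFin_Rintegral f : mu.-integrable setT (EFin \o f) ->
  (\int[mu]_t (f t)%:E)%E = (\int[mu]_t f t)%:E.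
Proof. by move=> if_; rewrite fineK// integrable_fin_num. Qed.

Lemma Rintegral_indic A : measurable A -> \int[mu]_t \1_A t = fine (mu A).
Proof. by move=> mA; rewrite /Rintegral integral_indic// setIT. Qed.

End integrable_EFin.

Lemma min0D_ge {R : realType} (x w h : R) : 0 <= h ->
  Num.min (x - w) 0 - h * \1_[set y | y < w + h] x <= Num.min (x - (w + h)) 0.
Proof.
move=> h0; rewrite indicE !minEle.
have [xlt|xge] := ltP x (w + h).
  by rewrite mem_set //=; case: ifP => ?; case: ifP => ?; lra.
by rewrite memNset /= ?ltNge ?xge //; case: ifP => ?; case: ifP => ?; lra.
Qed.

Lemma min0B_ge {R : realType} (x w h : R) : 0 <= h ->
  Num.min (x - w) 0 + h * \1_[set y | y <= w - h] x <= Num.min (x - (w - h)) 0.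
Proof.
move=> h0; rewrite indicE !minEle.
have [xle|xgt] := leP x (w - h).
  by rewrite mem_set //=; case: ifP => ?; case: ifP => ?; lra.
by rewrite memNset /= ?leNgt ?xgt //; case: ifP => ?; case: ifP => ?; lra.
Qed.

Section shortfall.
Set Implicit Arguments.
Unset Strict Implicit.
Context {d : measure_display} {T : measurableType d} {R : realType}
  (P : {finite_measure set T -> \bar R}).

Definition shortfall (X : T -> R) (w : R) : R := \int[P]_t Num.min (X t - w) 0.

Variable X : T -> R.
Hypothesis mX : measurable_fun setT X.
Hypothesis iX : P.-integrable setT (EFin \o X).

Lemma measurable_sublevel_lt r : measurable [set t | X t < r].
Proof.
have := mX measurableT (measurable_itv `]-oo, r[); rewrite setTI.
by congr measurable; apply/seteqP; split => t /=; rewrite in_itv.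
Qed.

Lemma measurable_sublevel_le r : measurable [set t | X t <= r].
Proof.
have := mX measurableT (measurable_itv `]-oo, r]); rewrite setTI.
by congr measurable; apply/seteqP; split => t /=; rewrite in_itv.
Qed.

Lemma integrable_min0 w :
  P.-integrable setT (EFin \o (fun t => Num.min (X t - w) 0)).
Proof.
have iXw : P.-integrable setT (EFin \o (fun t => `|X t| + `|w|)).
  apply: integrableD_EFin; last exact: finite_measure_integrable_cst.
  exact: (eq_integrable measurableT _ _ _ (integrable_abse iX)).
apply: (le_integrable measurableT) iXw => [|t _].
  apply/measurable_EFinP/measurable_minr; last exact: measurable_cst.
  by apply: measurable_funD => //; exact: measurable_cst.
rewrite /= lee_fin [`|_ + _|]ger0_norm ?addr_ge0// minEle.
case: ifP => _; last by rewrite normr0 addr_ge0.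
exact: ler_normB.
Qed.

Lemma shortfallD_ge w h : 0 <= h ->
  shortfall X w - h * fine (P [set t | X t < w + h]) <= shortfall X (w + h).
Proof.
move=> h0; have mA := measurable_sublevel_lt (w + h).
have iA := integrableZl_EFin h (integrable_indic P mA).
rewrite /shortfall -Rintegral_indic// -RintegralZl//; last exact: integrable_indic.
rewrite -RintegralB//; last exact: integrable_min0.
apply: le_Rintegral => //; last by move=> t _; exact: min0D_ge.
  exact: integrableB_EFin (integrable_min0 w) iA.
exact: integrable_min0.
Qed.

Lemma shortfallB_ge w h : 0 <= h ->
  shortfall X w + h * fine (P [set t | X t <= w - h]) <= shortfall X (w - h).
Proof.
move=> h0; have mA := measurable_sublevel_le (w - h).
have iA := integrableZl_EFin h (integrable_indic P mA).
rewrite /shortfall -Rintegral_indic// -RintegralZl//; last exact: integrable_indic.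
rewrite -RintegralD//; last exact: integrable_min0.
apply: le_Rintegral => //; last by move=> t _; exact: min0B_ge.
  exact: integrableD_EFin (integrable_min0 w) iA.
exact: integrable_min0.
Qed.

Lemma le_probability_le_of_ltD (a : \bar R) (w : R) :
  (forall h, 0 < h -> (a <= P [set t | (X t < w + h)%R])%E) ->
  (a <= P [set t | (X t <= w)%R])%E.
Proof.
move=> aleP; pose A n := [set t | X t < w + n.+1%:R^-1].
have capA : \bigcap_n A n = [set t | X t <= w].
  apply/seteqP; split => t /=; last first.
    by move=> Xtw n _; rewrite /A /= (le_lt_trans Xtw)// ltrDl.
  move=> XtA; rewrite leNgt; apply/negP => /ltr_add_invr[n Xtn].
  by have := lt_trans (XtA n I) Xtn; rewrite ltxx.
have cvA : (P (A n) @[n --> \oo] --> P (\bigcap_n A n))%classic.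
  apply: nonincreasing_cvg_mu => [|n||n m nm].
  - by rewrite ltey_eq fin_num_measure//; exact: measurable_sublevel_lt.
  - exact: measurable_sublevel_lt.
  - by rewrite capA; exact: measurable_sublevel_le.
  - apply/subsetPset => t; rewrite /A /= => /lt_le_trans; apply.
    by rewrite lerD2l lef_pV2 ?posrE// ler_nat.
rewrite -capA -(cvg_lim (@ereal_hausdorff R) cvA).
by apply: lime_ge; [exact: cvgP cvA | apply: nearW => n; exact: aleP].
Qed.

Lemma probability_lt_le_of_leB (a : \bar R) (w : R) :
  (forall h, 0 < h -> (P [set t | (X t <= w - h)%R] <= a)%E) ->
  (P [set t | (X t < w)%R] <= a)%E.
Proof.
move=> Plea; pose B n := [set t | X t <= w - n.+1%:R^-1].
have cupB : \bigcup_n B n = [set t | X t < w].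
  apply/seteqP; split => t /=.
    by move=> [n _ /le_lt_trans]; apply; rewrite gtrDl oppr_lt0.
  by move=> /ltr_add_invr[n Xtn]; exists n => //; rewrite /B /= lerBrDr ltW.
have cvB : (P (B n) @[n --> \oo] --> P (\bigcup_n B n))%classic.
  apply: nondecreasing_cvg_mu => [n||n m nm].
  - exact: measurable_sublevel_le.
  - by rewrite cupB; exact: measurable_sublevel_lt.
  - apply/subsetPset => t; rewrite /B /= => /le_trans; apply.
    by rewrite lerD2l lerN2 lef_pV2 ?posrE// ler_nat.
rewrite -cupB -(cvg_lim (@ereal_hausdorff R) cvB).
by apply: lime_le; [exact: cvgP cvB | apply: nearW => n; exact: Plea].
Qed.

Lemma shortfall_argmax_quantile (a w0 : R) :
  (forall w, shortfall X w + a * w <= shortfall X w0 + a * w0) ->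
  (P [set t | (X t < w0)%R] <= a%:E)%E /\ (a%:E <= P [set t | (X t <= w0)%R])%E.
Proof.
move=> w0_max.
have PE A : measurable A -> P A = (fine (P A))%:E by move=> mA; rewrite fineK// fin_num_measure.
split.
  apply: probability_lt_le_of_leB => h h0.
  rewrite (PE _ (measurable_sublevel_le _)) lee_fin -(ler_pM2l h0).
  by have := shortfallB_ge w0 (ltW h0); have := w0_max (w0 - h); lra.
apply: le_probability_le_of_ltD => h h0.
rewrite (PE _ (measurable_sublevel_lt _)) lee_fin -(ler_pM2l h0).
by have := shortfallD_ge w0 (ltW h0); have := w0_max (w0 + h); lra.
Qed.

Lemma shortfall_argmax_probability (a w0 : R) :
  P [set t | X t = w0] = 0%E ->
  (forall w, shortfall X w + a * w <= shortfall X w0 + a * w0) ->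
  P [set t | (X t < w0)%R] = a%:E.
Proof.
move=> Pw0 /shortfall_argmax_quantile[Plt_le aleP]; apply/le_anti.
rewrite Plt_le /=; apply: le_trans aleP _.
have -> : [set t | X t <= w0] = [set t | X t < w0] `|` [set t | X t = w0].
  apply/seteqP; split => t /=; first by rewrite le_eqVlt => /orP[/eqP|]; [right|left].
  by move=> [/ltW|->].
rewrite measureU//; last 3 first.
- exact: measurable_sublevel_lt.
- by have := mX measurableT (measurable_set1 w0); rewrite setTI.
- by apply/seteqP; split => t //= [/lt_eqF/eqP].
by rewrite -[Z in (_ + Z)%E]/(P [set t | X t = w0]) Pw0 adde0.
Qed.

End shortfall.

Section decumulation.
Set Implicit Arguments.
Unset Strict Implicit.
Context {d : measure_display} {T : measurableType d} {R : realType}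
  (P : probability T R) (Ctrl : Type) (Qsum WT : Ctrl -> T -> R) (eps : R).
Hypothesis hQ : forall c, measurable_fun setT (Qsum c) /\
  P.-integrable setT (fun t => (Qsum c t)%:E).
Hypothesis hW : forall c, measurable_fun setT (WT c) /\
  P.-integrable setT (fun t => (WT c t)%:E).

Local Notation J_LS := (J_LS P Qsum WT eps).
Local Notation LS_solution := (LS_solution P Qsum WT eps).
Local Notation G_ES := (G_ES P Qsum WT eps).
Local Notation V_ES := (V_ES P Qsum WT eps).

Definition LS_reward w khat c t :=
  Qsum c t + khat * Num.min (WT c t - w) 0 + eps * WT c t.

Lemma integrable_LS_reward w khat c :
  P.-integrable setT (EFin \o LS_reward w khat c).
Proof.
apply: integrableD_EFin; last exact: integrableZl_EFin (hW c).2.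
apply: integrableD_EFin; first exact: (hQ c).2.
by apply: integrableZl_EFin; apply: integrable_min0; [exact: (hW c).1|exact: (hW c).2].
Qed.

Lemma J_LSE w khat c : J_LS w khat c = (\int[P]_t LS_reward w khat c t)%:E.
Proof. exact: EFin_Rintegral (integrable_LS_reward w khat c). Qed.

Lemma J_LS_shortfall w khat c : J_LS w khat c =
  (\int[P]_t (Qsum c t + eps * WT c t) + khat * shortfall P (WT c) w)%:E.
Proof.
have iS := integrable_min0 (hW c).1 (hW c).2 w.
rewrite J_LSE /shortfall -RintegralZl// -RintegralD//.
- by congr EFin; apply: eq_Rintegral => t _; rewrite /LS_reward; ring.
- by apply: integrableD_EFin; [exact: (hQ c).2|exact: integrableZl_EFin (hW c).2].
- exact: integrableZl_EFin.
Qed.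

Lemma G_ES_J_LS alpha khat c w : alpha != 0 ->
  G_ES alpha (alpha * khat) c w = (J_LS w khat c + (alpha * khat * w)%:E)%E.
Proof.
move=> alpha0; have iR := integrable_LS_reward w khat c.
have iC := finite_measure_integrable_cst P (alpha * khat * w) measurableT.
rewrite J_LSE /G_ES (eq_integral (EFin \o (LS_reward w khat c \+ cst (alpha * khat * w)))).
  rewrite EFin_Rintegral; last exact: integrableD_EFin.
  have P1 : fine (P setT) = 1 by rewrite probability_setT.
  by rewrite RintegralD// Rintegral_cst// P1 mulr1 EFinD.
by move=> t _; congr EFin; rewrite /LS_reward /=; field.
Qed.

Lemma V_ES_LS_solution alpha khat w c : alpha != 0 -> LS_solution w khat c ->
  V_ES alpha (alpha * khat) w = G_ES alpha (alpha * khat) c w.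
Proof.
move=> alpha0 c_opt; apply/le_anti/andP; split; last by apply: ereal_sup_ubound; exists c.
apply: ge_ereal_sup => _ [c' _ <-]; rewrite !G_ES_J_LS//.
by apply: leeD2r; exact: c_opt.
Qed.

Lemma ES_solution_of_V_ES_argmax alpha khat w c : alpha != 0 ->
  (forall w', (V_ES alpha (alpha * khat) w' <= V_ES alpha (alpha * khat) w)%E) ->
  LS_solution w khat c -> ES_solution P Qsum WT eps alpha (alpha * khat) c.
Proof.
move=> alpha0 w_max c_opt c'; apply: (@le_trans _ _ (V_ES alpha (alpha * khat) w)).
  apply: ge_ereal_sup => _ [w' _ <-]; apply: le_trans (w_max w').
  by apply: ereal_sup_ubound; exists c'.
by rewrite (V_ES_LS_solution alpha0 c_opt); apply: ereal_sup_ubound; exists w.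
Qed.

Hypothesis hcont : forall c w, P [set t | WT c t = w] = 0%E.

Lemma alpha_rel_of_V_ES_argmax alpha khat w c : 0 < alpha -> 0 < khat ->
  (forall w', (V_ES alpha (alpha * khat) w' <= V_ES alpha (alpha * khat) w)%E) ->
  LS_solution w khat c -> alpha_rel P Qsum WT eps khat w alpha.
Proof.
move=> alpha0 khat0 w_max c_opt; exists c; split => //.
have {}alpha0 : alpha != 0 by rewrite gt_eqF.
have w_argmax w' : shortfall P (WT c) w' + alpha * w' <= shortfall P (WT c) w + alpha * w.
  have : (G_ES alpha (alpha * khat) c w' <= G_ES alpha (alpha * khat) c w)%E.
    rewrite -(V_ES_LS_solution alpha0 c_opt); apply: le_trans (w_max w').
    by apply: ereal_sup_ubound; exists c.
  rewrite !G_ES_J_LS// !J_LS_shortfall -!EFinD lee_fin => le_ww'.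
  by rewrite -(ler_pM2l khat0); lra.
by rewrite (shortfall_argmax_probability (hW c).1 (hW c).2 (hcont c w) w_argmax).
Qed.

End decumulation.

Theorem proposition2
  (d : measure_display) (T : measurableType d) (R : realType)
  (P : probability T R) (Ctrl : Type) (Qsum WT : Ctrl -> T -> R) (eps : R)
  (* the withdrawals and terminal wealth are integrable random variables *)
  (hQ : forall c, measurable_fun setT (Qsum c) /\
                  P.-integrable setT (fun t => (Qsum c t)%:E))
  (hW : forall c, measurable_fun setT (WT c) /\
                  P.-integrable setT (fun t => (WT c t)%:E))
  (* standing assumption: W_T has a continuous distribution *)
  (hcont : forall c (w : R), P [set t | WT c t = w] = 0%E)
  (* standing assumption: the maximizing W' = W^* of EW-ES exists *)
  (hWstar : forall alpha kappa : R, 0 < alpha < 1 -> 0 < kappa ->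
     exists Wst : R, forall W' : R,
       (V_ES P Qsum WT eps alpha kappa W' <= V_ES P Qsum WT eps alpha kappa Wst)%E)
  (khat W : R)
  (* alpha^*_{khat}(W') is defined for every W': EW-LS(W', khat) has an
     optimal control for each W' *)
  (hex : forall W' : R, exists c : Ctrl, LS_solution P Qsum WT eps W' khat c)
  (hD : in_Dplus P Qsum WT eps W khat)
  (* invertibility assumption at (W, khat) *)
  (hwd : alpha_welldef P Qsum WT eps khat)
  (hinv : forall W' : R, W' <> W -> in_Dplus P Qsum WT eps W' khat ->
     forall a a', alpha_rel P Qsum WT eps khat W' a ->
                  alpha_rel P Qsum WT eps khat W a' -> a <> a') :
  forall astar : R, alpha_rel P Qsum WT eps khat W astar ->
    (0 < astar < 1 /\ 0 < astar * khat) /\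
    forall c : Ctrl, LS_solution P Qsum WT eps W khat c ->
      ES_solution P Qsum WT eps astar (astar * khat) c.
Proof.
move=> astar astar_rel; have [khat_gt0 [a [a_rel [a_gt0 a_lt1]]]] := hD.
move: a_gt0 a_lt1; rewrite (hwd _ _ _ a_rel astar_rel) => astar_gt0 astar_lt1.
have astar01 : 0 < astar < 1 by apply/andP.
have astar_neq0 : astar != 0 by rewrite gt_eqF.
split; first by split => //; exact: mulr_gt0.
have [Wst Wst_max] := hWstar _ _ astar01 (mulr_gt0 astar_gt0 khat_gt0).
have [cs cs_opt] := hex Wst.
have Wst_rel : alpha_rel P Qsum WT eps khat Wst astar.
  exact: (alpha_rel_of_V_ES_argmax hQ hW hcont astar_gt0 khat_gt0 Wst_max cs_opt).
have WstE : Wst = W.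
  apply: contrapT => WstW; apply: (hinv Wst WstW _ _ _ Wst_rel astar_rel erefl).
  by split=> //; exists astar.
move=> c c_opt; rewrite -WstE in c_opt.
exact: (ES_solution_of_V_ES_argmax hQ hW astar_neq0 Wst_max c_opt).
Qed.
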